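(* Consider the vector nonlinear Riemann–Hilbert problem on the real line $$\phi_i^+(\lambda)=\mathcal R_i(\phi_1^-(\lambda),\phi_2^-(\lambda),\lambda),\quad i=1,2,\ \lambda\in\mathbb R,$$ where $\mathcal R_i(\zeta_1,\zeta_2,\lambda)=\zeta_i+R_i(\zeta_1,\zeta_2,\lambda)$ for given spectral data $R_1,R_2$ (defined for $(\zeta_1,\zeta_2)\in\mathbb C^2$, $\lambda\in\mathbb R$, independent of $x,y,z,t$), and where $\phi_i^{+}$ (resp. $\phi_i^-$) are analytic in $\lambda$ in the upper (resp. lower) half-plane and depend on parameters $(x,y,z,t)$, with normalization $$\phi_1^{\pm}(\lambda)=-y+O(\lambda^{-1}),\qquad \phi_2^{\pm}(\lambda)=x+\lambda t+O(\lambda^{-1}),\qquad |\lambda|\gg1.$$ Assume this Riemann–Hilbert problem and its linearization $\vec\sigma^+=\mathcal J\vec\sigma^-$ (where $\mathcal J$ is the Jacobian matrix $\mathcal J_{ij}=\partial\mathcal R_i/\partial\zeta_j$ evaluated at $\vec\phi^-$) are uniquely solvable. Define $u$ by $$u_x=\lim_{\lambda\to\infty}\lambda(\phi_1^{\pm}+y),\qquad u_y=\lim_{\lambda\to\infty}\lambda(\phi_2^{\pm}-x-\lambda t).$$ Then $\vec\phi^{\pm}=(\phi_1^\pm,\phi_2^\pm)$ are common eigenfunctions of the vector fields $$T=\partial_t+(u_{xy}-\lambda)\partial_x-u_{xx}\partial_y,\qquad Z=\lambda\partial_z-u_{yz}\partial_x+u_{zx}\partial_y,$$ i.e. $T\phi_i^\pm=Z\phi_i^\pm=0$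 for $i=1,2$.
   Context: The vector fields $T,Z$ form the Lax pair of the Doubrov–Ferapontov modified heavenly equation $u_{zt}+u_{zx}u_{xy}-u_{yz}u_{xx}=0$. Subscripts denote partial derivatives. *)

From Stdlib Require Import Reals.
From Coquelicot Require Export Coquelicot.

Open Scope R_scope.

Inductive sgn := Plus | Minus.
Inductive idx := I1 | I2.
Inductive dir := Dx | Dy | Dz | Dt.

Definition half (s : sgn) (l : C) : Prop :=
  match s with Plus => 0 <= Im l | Minus => Im l <= 0 end.
Definition ohalf (s : sgn) (l : C) : Prop :=
  match s with Plus => 0 < Im l | Minus => Im l < 0 end.

(** Analytic (complex-differentiable) in the open half-plane, continuous up to
    the real axis (so that the boundary values on R are the restriction). *)
Definition RH_analytic (s : sgn) (f : C -> C) : Prop :=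
  (forall l, ohalf s l -> @ex_derive C_AbsRing C_NormedModule f l) /\
  (forall l, half s l -> filterlim f (within (half s) (locally l)) (locally (f l))).

Definition lim_inf_in (S : C -> Prop) (f : C -> C) (L : C) : Prop :=
  forall eps, 0 < eps -> exists K, forall l, S l -> K <= Cmod l -> Cmod (f l - L) < eps.

Definition bigO_inv (S : C -> Prop) (f : C -> C) : Prop :=
  exists M K, forall l, S l -> K <= Cmod l -> Cmod l * Cmod (f l) <= M.

Definition cdiff2 (F : C -> C -> C) (z1 z2 A B : C) : Prop :=
  forall eps, 0 < eps -> exists delta, 0 < delta /\
    forall h1 h2, Cmod h1 < delta -> Cmod h2 < delta ->
      Cmod (F (z1 + h1)%C (z2 + h2)%C - F z1 z2 - A * h1 - B * h2)%C
        <= eps * (Cmod h1 + Cmod h2).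

Definition F4 := R -> R -> R -> R -> C.

Definition slice (a : dir) (F : F4) (x y z t : R) : R -> C :=
  match a with
  | Dx => fun s => F s y z t
  | Dy => fun s => F x s z t
  | Dz => fun s => F x y s t
  | Dt => fun s => F x y z s
  end.
Definition coord (a : dir) (x y z t : R) : R :=
  match a with Dx => x | Dy => y | Dz => z | Dt => t end.

Definition ex_pd (a : dir) (F : F4) (x y z t : R) : Prop :=
  ex_derive (fun s => Re (slice a F x y z t s)) (coord a x y z t) /\
  ex_derive (fun s => Im (slice a F x y z t s)) (coord a x y z t).

Definition pd (a : dir) (F : F4) : F4 := fun x y z t =>
  (Derive (fun s => Re (slice a F x y z t s)) (coord a x y z t),
   Derive (fun s => Im (slice a F x y z t s)) (coord a x y z t)).

Definition lead (i : idx) (x y z t : R) (l : C) : C :=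
  match i with
  | I1 => RtoC (- y)
  | I2 => (RtoC x + l * RtoC t)%C
  end.

Definition one_if_eq (i j : idx) : C :=
  match i, j with I1, I1 | I2, I2 => 1%C | _, _ => 0%C end.

(** Vector RH problem with spectral data Rsp_i (calR_i = zeta_i + Rsp_i),
    normalization at parameters (x,y,z,t): psi s i is the function phi_i^s. *)
Definition is_RH_solution (Rsp : idx -> C -> C -> R -> C) (x y z t : R)
    (psi : sgn -> idx -> C -> C) : Prop :=
  (forall s i, RH_analytic s (psi s i)) /\
  (forall i (r : R), psi Plus i (RtoC r) =
      (psi Minus i (RtoC r) + Rsp i (psi Minus I1 (RtoC r)) (psi Minus I2 (RtoC r)) r)%C) /\
  (forall s i, bigO_inv (half s) (fun l => psi s i l - lead i x y z t l)%C).

(** Jacobian J_ij = d calR_i / d zeta_j evaluated at phi^-, given the partial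
    derivatives dR i j of Rsp_i w.r.t. zeta_j. *)
Definition Jac (dR : idx -> idx -> C -> C -> R -> C) (phim : idx -> C -> C)
    (i j : idx) (r : R) : C :=
  (one_if_eq i j + dR i j (phim I1 (RtoC r)) (phim I2 (RtoC r)) r)%C.

(** Unique solvability of the linearized problem sigma^+ = J sigma^-:
    its only solution vanishing at infinity is the trivial one. *)
Definition lin_unique (dR : idx -> idx -> C -> C -> R -> C) (phim : idx -> C -> C) : Prop :=
  forall sigma : sgn -> idx -> C -> C,
    (forall s i, RH_analytic s (sigma s i)) ->
    (forall i (r : R), sigma Plus i (RtoC r) =
        (Jac dR phim i I1 r * sigma Minus I1 (RtoC r)
         + Jac dR phim i I2 r * sigma Minus I2 (RtoC r))%C) ->
    (forall s i, lim_inf_in (half s) (sigma s i) 0%C) ->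
    forall s i l, half s l -> sigma s i l = 0%C.

(** The vector fields T and Z applied to F (at fixed spectral parameter l).
    u_xy := d_x d_y u, u_xx := d_x d_x u, u_yz := d_z d_y u, u_zx := d_z d_x u. *)
Definition Tvf (u : F4) (F : F4) (l : C) : F4 := fun x y z t =>
  (pd Dt F x y z t + (pd Dx (pd Dy u) x y z t - l) * pd Dx F x y z t
   - pd Dx (pd Dx u) x y z t * pd Dy F x y z t)%C.

Definition Zvf (u : F4) (F : F4) (l : C) : F4 := fun x y z t =>
  (l * pd Dz F x y z t - pd Dz (pd Dy u) x y z t * pd Dx F x y z t
   + pd Dz (pd Dx u) x y z t * pd Dy F x y z t)%C.

Definition ulead (u : F4) (i : idx) : F4 :=
  match i with I1 => pd Dx u | I2 => pd Dy u end.

Definition wres (phi : sgn -> idx -> R -> R -> R -> R -> C -> C)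
    (s : sgn) (i : idx) (l : C) : F4 :=
  fun x y z t => (phi s i x y z t l - lead i x y z t l)%C.

From Pilot Require Import Defs.
From Stdlib Require Import Reals Lra.
From Coquelicot Require Import Coquelicot.
(* so that the constructor [Dx] of [dir] shadows Stdlib's [Dx] again *)
Import Defs.

(* Both T and Z have the form V = sum_a (A_a + l B_a) d_a with coefficients
   independent of the index i and of the half-plane.  Hence sigma_i^s := V phi_i^s
   is analytic in each half-plane, and differentiating the jump relation in the
   parameters (chain rule) shows that sigma solves the linearized problem
   sigma^+ = J sigma^-.  Writing phi = lead + w with l d_a w -> d_a(u_x) resp.
   d_a(u_y), the terms of V phi that do not vanish at infinity are V(lead) plus
   sum_a B_a d_a(u_x) resp. d_a(u_y), and for T and Z this sum is zero: that is
   exactly how u_xx, u_xy, u_yz, u_zx enter the coefficients.  Unique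
   solvability of the linearized problem then forces sigma = 0. *)

Open Scope R_scope.

Lemma is_derive_C_AbsRing (f : C -> C) (z l : C) :
  @is_derive C_AbsRing C_NormedModule f z l <->
  @is_derive C_AbsRing (AbsRing_NormedModule C_AbsRing) f z l.
Proof. split; intros [[H1 H2 H3] H4]; split; [split | | split |]; assumption. Qed.

Lemma filterlim_Cmult (x y : C) :
  filterlim (fun z : C * C => (fst z * snd z)%C)
    (filter_prod (locally x) (locally y)) (locally (x * y)%C).
Proof.
  (* C carries the product uniformity, C_AbsRing the one of Cmod: same neighbourhoods *)
  assert (to_abs : forall z : C, filter_le (@locally C_UniformSpace z)
                                          (@locally (AbsRing_UniformSpace C_AbsRing) z)).
  { intros z P HP. apply (locally_le_locally_norm (V := C_NormedModule)).
    apply (locally_norm_le_locally (V := AbsRing_NormedModule C_AbsRing)) in HP.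
    destruct HP as [e He]. now exists e. }
  assert (of_abs : forall z : C, filter_le (@locally (AbsRing_UniformSpace C_AbsRing) z)
                                          (@locally C_UniformSpace z)).
  { intros z P HP. apply (locally_le_locally_norm (V := AbsRing_NormedModule C_AbsRing)).
    apply (locally_norm_le_locally (V := C_NormedModule)) in HP.
    destruct HP as [e He]. now exists e. }
  eapply filterlim_filter_le_2; [apply of_abs |].
  eapply filterlim_filter_le_1; [| apply (@filterlim_mult C_AbsRing x y)].
  intros P [Q R HQ HR HP]. exists Q R; [apply to_abs, HQ | apply to_abs, HR | exact HP].
Qed.

Lemma RH_analytic_binop s (op : C -> C -> C) (f g : C -> C) :
  (forall z df dg, @is_derive C_AbsRing C_NormedModule f z df ->
     @is_derive C_AbsRing C_NormedModule g z dg ->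
     @ex_derive C_AbsRing C_NormedModule (fun l => op (f l) (g l)) z) ->
  (forall a b, filterlim (fun z : C * C => op (fst z) (snd z))
                 (filter_prod (locally a) (locally b)) (locally (op a b))) ->
  RH_analytic s f -> RH_analytic s g -> RH_analytic s (fun l => op (f l) (g l)).
Proof.
  intros Hder Hcont [Df Cf] [Dg Cg]. split.
  - intros l Hl. destruct (Df l Hl) as [df Hf], (Dg l Hl) as [dg Hg].
    exact (Hder l df dg Hf Hg).
  - intros l Hl.
    apply (filterlim_comp_2 (G := locally (f l)) (H := locally (g l)) f g op);
      [apply Cf, Hl | apply Cg, Hl | apply Hcont].
Qed.

Lemma RH_analytic_plus s f g :
  RH_analytic s f -> RH_analytic s g -> RH_analytic s (fun l => f l + g l)%C.
Proof.
  apply RH_analytic_binop.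
  - intros z df dg Hf Hg. eexists. exact (is_derive_plus _ _ _ _ _ Hf Hg).
  - intros a b. apply (@filterlim_plus C_AbsRing C_NormedModule).
Qed.

Lemma RH_analytic_mult s f g :
  RH_analytic s f -> RH_analytic s g -> RH_analytic s (fun l => f l * g l)%C.
Proof.
  apply RH_analytic_binop; [| apply filterlim_Cmult].
  intros z df dg Hf Hg. eexists. apply is_derive_C_AbsRing.
  apply is_derive_C_AbsRing in Hf, Hg. exact (is_derive_mult _ _ _ _ _ Hf Hg Cmult_comm).
Qed.

Lemma RH_analytic_const s (c : C) : RH_analytic s (fun _ => c).
Proof.
  split; intros l _.
  - exists (RtoC 0). apply (@is_derive_const C_AbsRing C_NormedModule).
  - apply filterlim_const.
Qed.

Lemma RH_analytic_id s : RH_analytic s (fun l => l).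
Proof.
  split; intros l _.
  - exists (RtoC 1). apply is_derive_C_AbsRing, (@is_derive_id C_AbsRing).
  - intros P HP. unfold filtermap, within. apply (filter_imp P); [intros z Hz _; exact Hz | exact HP].
Qed.

Lemma lim_inf_in_ext S f g L :
  (forall l, S l -> f l = g l) -> lim_inf_in S f L -> lim_inf_in S g L.
Proof.
  intros Hfg H eps Heps. destruct (H eps Heps) as [K HK]. exists K.
  intros l Hl HKl. rewrite <- Hfg by exact Hl. now apply HK.
Qed.

Lemma lim_inf_in_plus S f g L1 L2 :
  lim_inf_in S f L1 -> lim_inf_in S g L2 -> lim_inf_in S (fun l => f l + g l)%C (L1 + L2)%C.
Proof.
  intros H1 H2 eps Heps.
  destruct (H1 (eps / 2)) as [K1 HK1]; [lra |]. destruct (H2 (eps / 2)) as [K2 HK2]; [lra |].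
  exists (Rmax K1 K2). intros l Hl HK.
  pose proof (HK1 l Hl (Rle_trans _ _ _ (Rmax_l K1 K2) HK)).
  pose proof (HK2 l Hl (Rle_trans _ _ _ (Rmax_r K1 K2) HK)).
  replace (f l + g l - (L1 + L2))%C with ((f l - L1) + (g l - L2))%C by ring.
  pose proof (Cmod_triangle (f l - L1) (g l - L2)). lra.
Qed.

Lemma lim_inf_in_scal S (c : C) f L :
  lim_inf_in S f L -> lim_inf_in S (fun l => c * f l)%C (c * L)%C.
Proof.
  intros H eps Heps. pose proof (Cmod_ge_0 c).
  destruct (H (eps / (Cmod c + 1))) as [K HK]; [apply Rdiv_lt_0_compat; lra |].
  exists K. intros l Hl HKl. specialize (HK l Hl HKl).
  replace (c * f l - c * L)%C with (c * (f l - L))%C by ring. rewrite Cmod_mult.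
  assert (Cmod c * (eps / (Cmod c + 1)) < eps).
  { apply Rmult_lt_reg_r with (Cmod c + 1); [lra |]. field_simplify; lra. }
  pose proof (Cmod_ge_0 (f l - L)). nra.
Qed.

Lemma lim_inf_in_sub_limit S f L : lim_inf_in S f L -> lim_inf_in S (fun l => f l - L)%C 0%C.
Proof.
  intros H eps Heps. destruct (H eps Heps) as [K HK]. exists K.
  intros l Hl HKl. replace (f l - L - 0)%C with (f l - L)%C by ring. now apply HK.
Qed.

Lemma lim_inf_in_mul_id_vanish S f L :
  lim_inf_in S (fun l => l * f l)%C L -> lim_inf_in S f 0%C.
Proof.
  intros H eps Heps. destruct (H 1) as [K HK]; [lra |].
  pose proof (Cmod_ge_0 L).
  exists (Rmax K ((Cmod L + 1) / eps + 1)). intros l Hl HKl.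
  replace (f l - 0)%C with (f l) by ring.
  specialize (HK l Hl (Rle_trans _ _ _ (Rmax_l _ _) HKl)).
  pose proof (Rle_trans _ _ _ (Rmax_r _ _) HKl) as Hl_large.
  assert (Hprod : Cmod l * Cmod (f l) <= Cmod L + 1).
  { rewrite <- Cmod_mult. replace (l * f l)%C with ((l * f l - L) + L)%C by ring.
    pose proof (Cmod_triangle (l * f l - L) L). lra. }
  assert (Hbig : Cmod L + 1 < Cmod l * eps).
  { apply (Rmult_le_compat_r eps) in Hl_large; [| lra].
    replace (((Cmod L + 1) / eps + 1) * eps) with (Cmod L + 1 + eps) in Hl_large by (field; lra).
    lra. }
  destruct (Rlt_or_le (Cmod (f l)) eps) as [Hsmall | Hge]; [exact Hsmall |].
  pose proof (Cmod_ge_0 l). nra.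
Qed.

Definition dsum (f : dir -> C) : C := (f Dx + f Dy + f Dz + f Dt)%C.

Lemma lim_inf_in_dsum S (f : dir -> C -> C) (L : dir -> C) :
  (forall a, lim_inf_in S (f a) (L a)) -> lim_inf_in S (fun l => dsum (fun a => f a l)) (dsum L).
Proof.
  intros H. unfold dsum.
  apply lim_inf_in_plus; [apply lim_inf_in_plus; [apply lim_inf_in_plus |] |]; apply H.
Qed.

Lemma RH_analytic_dsum s (f : dir -> C -> C) :
  (forall a, RH_analytic s (f a)) -> RH_analytic s (fun l => dsum (fun a => f a l)).
Proof.
  intros H. unfold dsum.
  apply RH_analytic_plus; [apply RH_analytic_plus; [apply RH_analytic_plus |] |]; apply H.
Qed.

Notation C2 := (prod_NormedModule R_AbsRing C_R_NormedModule C_R_NormedModule).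

Lemma norm_C_R (z : C) : norm (K := R_AbsRing) (V := C_R_NormedModule) z = Cmod z.
Proof. now rewrite Cmod_norm. Qed.

Lemma scal_C_R (k : R) (z : C) : scal (V := C_R_NormedModule) k z = (RtoC k * z)%C.
Proof.
  destruct z. apply injective_projections; simpl; unfold scal; simpl; unfold mult; simpl; ring.
Qed.

Lemma is_derive_C_R (g : R -> C) r d :
  is_derive (fun r => Re (g r)) r (Re d) -> is_derive (fun r => Im (g r)) r (Im d) ->
  is_derive (V := C_R_NormedModule) g r d.
Proof.
  intros Hre Him.
  (* after unfolding [minus] on C_R, [g] only occurs through [Re (g _)] and [Im (g _)] *)
  apply (filterdiff_comp'_2 _ _ (fun a b => (a, b) : C_R_NormedModule) r _ _
           (fun a b => (a, b)) Hre Him).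
  apply filterdiff_linear, is_linear_prod; [apply is_linear_fst | apply is_linear_snd].
Qed.

Lemma is_derive_C_R_Re (g : R -> C) r d :
  is_derive (V := C_R_NormedModule) g r d -> is_derive (fun r => Re (g r)) r (Re d).
Proof.
  intros H. apply (filterdiff_comp' g (fun z : C_R_NormedModule => fst z) r _ fst H).
  apply filterdiff_linear, is_linear_fst.
Qed.

Lemma is_derive_C_R_Im (g : R -> C) r d :
  is_derive (V := C_R_NormedModule) g r d -> is_derive (fun r => Im (g r)) r (Im d).
Proof.
  intros H. apply (filterdiff_comp' g (fun z : C_R_NormedModule => snd z) r _ snd H).
  apply filterdiff_linear, is_linear_snd.
Qed.

Lemma is_linear_C2 (A B : C) :
  is_linear (U := C2) (V := C_R_NormedModule) (fun h => (A * fst h + B * snd h)%C).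
Proof.
  split.
  - intros h k. change ((A * (fst h + fst k) + B * (snd h + snd k))%C =
      (A * fst h + B * snd h + (A * fst k + B * snd k))%C). ring.
  - intros c h. rewrite !scal_C_R. simpl. rewrite !scal_C_R. ring.
  - exists (Cmod A + Cmod B + 1). pose proof (Cmod_ge_0 A); pose proof (Cmod_ge_0 B).
    split; [lra |]. intros h. rewrite norm_C_R.
    assert (N1 : Cmod (fst h) <= norm h) by (rewrite <- norm_C_R; apply norm_le_prod_norm_1).
    assert (N2 : Cmod (snd h) <= norm h) by (rewrite <- norm_C_R; apply norm_le_prod_norm_2).
    eapply Rle_trans; [apply Cmod_triangle |]. rewrite !Cmod_mult.
    pose proof (Cmod_ge_0 (fst h)); pose proof (Cmod_ge_0 (snd h)). nra.
Qed.

Lemma filterdiff_cdiff2 (F : C -> C -> C) z1 z2 A B :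
  cdiff2 F z1 z2 A B ->
  filterdiff (U := C2) (V := C_R_NormedModule) (fun w => F (fst w) (snd w))
    (locally (z1, z2)) (fun h => (A * fst h + B * snd h)%C).
Proof.
  intros HF. split; [apply is_linear_C2 |].
  intros w Hw. apply (@is_filter_lim_locally_unique _ C2) in Hw. subst w.
  intros eps. pose proof (cond_pos eps).
  destruct (HF (eps / 2)) as [delta [Hdelta HD]]; [lra |].
  apply (@locally_le_locally_norm _ C2). exists (mkposreal delta Hdelta).
  intros [w1 w2] Hw. unfold ball_norm in Hw. simpl in Hw.
  set (n := norm (minus (w1, w2) (z1, z2))) in *.
  assert (N1 : Cmod (w1 - z1) <= n)
    by (rewrite <- norm_C_R; apply (norm_le_prod_norm_1 (minus (w1, w2) (z1, z2)))).
  assert (N2 : Cmod (w2 - z2) <= n)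
    by (rewrite <- norm_C_R; apply (norm_le_prod_norm_2 (minus (w1, w2) (z1, z2)))).
  rewrite norm_C_R.
  change (Cmod (F w1 w2 - F z1 z2 - (A * (w1 - z1) + B * (w2 - z2))) <= eps * n).
  replace (F w1 w2) with (F (z1 + (w1 - z1)) (z2 + (w2 - z2)))%C by (f_equal; ring).
  replace (F (z1 + (w1 - z1)) (z2 + (w2 - z2)) - F z1 z2 - (A * (w1 - z1) + B * (w2 - z2)))%C
    with (F (z1 + (w1 - z1)) (z2 + (w2 - z2)) - F z1 z2 - A * (w1 - z1) - B * (w2 - z2))%C
    by ring.
  eapply Rle_trans.
  - apply HD; [apply (Rle_lt_trans _ _ _ N1 Hw) | apply (Rle_lt_trans _ _ _ N2 Hw)].
  - apply Rle_trans with (eps / 2 * (n + n)); [| lra].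
    apply Rmult_le_compat_l; [lra |]. now apply Rplus_le_compat.
Qed.

Lemma is_derive_C_R_comp_2 (F : C -> C -> C) (g1 g2 : R -> C) r d1 d2 A B :
  cdiff2 F (g1 r) (g2 r) A B ->
  is_derive (V := C_R_NormedModule) g1 r d1 -> is_derive (V := C_R_NormedModule) g2 r d2 ->
  is_derive (V := C_R_NormedModule) (fun r => F (g1 r) (g2 r)) r (A * d1 + B * d2)%C.
Proof.
  intros HF H1 H2. eapply filterdiff_ext_lin.
  - apply (filterdiff_comp'_2 g1 g2 F r _ _ (fun h1 h2 => A * h1 + B * h2)%C H1 H2).
    exact (filterdiff_cdiff2 F _ _ A B HF).
  - intros h. simpl. rewrite !scal_C_R. ring.
Qed.

Lemma is_derive_slice a (F : F4) x y z t :
  ex_pd a F x y z t ->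
  is_derive (V := C_R_NormedModule) (slice a F x y z t) (coord a x y z t) (pd a F x y z t).
Proof. intros [Hre Him]. now apply is_derive_C_R; apply Derive_correct. Qed.

Lemma pd_unique a (F : F4) x y z t d :
  is_derive (V := C_R_NormedModule) (slice a F x y z t) (coord a x y z t) d ->
  pd a F x y z t = d.
Proof.
  intros H. destruct d as [dre dim]. unfold pd. f_equal; apply is_derive_unique.
  - exact (is_derive_C_R_Re _ _ _ H).
  - exact (is_derive_C_R_Im _ _ _ H).
Qed.

Definition dlead (a : dir) (i : idx) (l : C) : C :=
  match i, a with
  | I1, Dy => (-1)%C
  | I2, Dx => 1%C
  | I2, Dt => l
  | _, _ => 0%C
  end.

Lemma is_derive_lead a i x y z t l :
  is_derive (V := C_R_NormedModule) (slice a (fun x y z t => lead i x y z t l) x y z t)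
    (coord a x y z t) (dlead a i l).
Proof.
  destruct l as [lre lim].
  apply is_derive_C_R; destruct a, i; simpl; auto_derive; auto; ring.
Qed.

Lemma pd_lead a i x y z t l : pd a (fun x y z t => lead i x y z t l) x y z t = dlead a i l.
Proof. apply pd_unique, is_derive_lead. Qed.

Lemma pd_split_lead (phi : sgn -> idx -> R -> R -> R -> R -> C -> C) s i a x y z t l :
  ex_pd a (fun x y z t => phi s i x y z t l) x y z t ->
  pd a (fun x y z t => phi s i x y z t l) x y z t =
  (dlead a i l + pd a (wres phi s i l) x y z t)%C.
Proof.
  intros H.
  assert (Hw : pd a (wres phi s i l) x y z t =
               (pd a (fun x y z t => phi s i x y z t l) x y z t - dlead a i l)%C).
  { apply pd_unique.
    eapply is_derive_ext; [| exact (is_derive_minus _ _ _ _ _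
                                      (is_derive_slice _ _ _ _ _ _ H) (is_derive_lead a i x y z t l))].
    intros r. now destruct a. }
  rewrite Hw. ring.
Qed.

Definition solves_lin_jump (dR : idx -> idx -> C -> C -> R -> C) (phim : idx -> C -> C)
    (sigma : sgn -> idx -> C -> C) : Prop :=
  forall i (r : R), sigma Plus i (RtoC r) =
    (Jac dR phim i I1 r * sigma Minus I1 (RtoC r)
     + Jac dR phim i I2 r * sigma Minus I2 (RtoC r))%C.

Lemma solves_lin_jump_dsum dR phim (c : dir -> C -> C) (sigma : dir -> sgn -> idx -> C -> C) :
  (forall a, solves_lin_jump dR phim (sigma a)) ->
  solves_lin_jump dR phim (fun s i l => dsum (fun a => c a l * sigma a s i l))%C.
Proof. intros H i r. unfold dsum. rewrite !H. ring. Qed.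

Definition vfield (A B : dir -> C) (F : F4) (l : C) (x y z t : R) : C :=
  dsum (fun a => (A a + l * B a) * pd a F x y z t)%C.

Lemma Tvf_vfield u F l x y z t :
  Tvf u F l x y z t =
  vfield (fun a => match a with
                   | Dx => pd Dx (pd Dy u) x y z t | Dy => (- pd Dx (pd Dx u) x y z t)%C
                   | Dz => 0%C | Dt => 1%C end)
         (fun a => match a with Dx => (-1)%C | _ => 0%C end) F l x y z t.
Proof. unfold Tvf, vfield, dsum. ring. Qed.

Lemma Zvf_vfield u F l x y z t :
  Zvf u F l x y z t =
  vfield (fun a => match a with
                   | Dx => (- pd Dz (pd Dy u) x y z t)%C | Dy => pd Dz (pd Dx u) x y z t
                   | _ => 0%C end)
         (fun a => match a with Dz => 1%C | _ => 0%C end) F l x y z t.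
Proof. unfold Zvf, vfield, dsum. ring. Qed.

Section Eigenfunctions.

Variables (Rsp : idx -> C -> C -> R -> C) (dR : idx -> idx -> C -> C -> R -> C)
  (phi : sgn -> idx -> R -> R -> R -> R -> C -> C) (u : F4).

Hypothesis HR : forall i (r : R) z1 z2,
  cdiff2 (fun a b => Rsp i a b r) z1 z2 (dR i I1 z1 z2 r) (dR i I2 z1 z2 r).
Hypothesis Hsol : forall x y z t, is_RH_solution Rsp x y z t (fun s i => phi s i x y z t).
Hypothesis Hlin : forall x y z t, lin_unique dR (fun i => phi Minus i x y z t).
Hypothesis Hpreg : forall s i a x y z t l, half s l ->
  ex_pd a (fun x y z t => phi s i x y z t l) x y z t.
Hypothesis Hpan : forall s i a x y z t,
  RH_analytic s (fun l => pd a (fun x y z t => phi s i x y z t l) x y z t).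
Hypothesis Hpas : forall s i a x y z t,
  lim_inf_in (half s) (fun l => l * pd a (wres phi s i l) x y z t)%C (pd a (ulead u i) x y z t).

Lemma pd_solves_lin_jump a x y z t :
  solves_lin_jump dR (fun i => phi Minus i x y z t)
    (fun s i l => pd a (fun x y z t => phi s i x y z t l) x y z t).
Proof.
  intros i r.
  assert (Hr : half Minus (RtoC r)) by (simpl; lra).
  set (g j := slice a (fun x y z t => phi Minus j x y z t (RtoC r)) x y z t).
  assert (Hg : forall j, is_derive (V := C_R_NormedModule) (g j) (coord a x y z t)
                           (pd a (fun x y z t => phi Minus j x y z t (RtoC r)) x y z t))
    by (intros j; apply is_derive_slice, Hpreg, Hr).
  assert (Hg0 : forall j, g j (coord a x y z t) = phi Minus j x y z t (RtoC r))
    by (intros j; now destruct a).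
  pose proof (is_derive_C_R_comp_2 (fun b c => Rsp i b c r) (g I1) (g I2) _ _ _ _ _
                (HR i r _ _) (Hg I1) (Hg I2)) as Hchain.
  rewrite !Hg0 in Hchain.
  assert (Hjump : forall r', (g i r' + Rsp i (g I1 r') (g I2 r') r)%C =
                    slice a (fun x y z t => phi Plus i x y z t (RtoC r)) x y z t r')
    by (intros r'; unfold g; destruct a; symmetry; apply (proj1 (proj2 (Hsol _ _ _ _)))).
  rewrite (pd_unique _ _ _ _ _ _ _
             (is_derive_ext _ _ _ _ Hjump (is_derive_plus _ _ _ _ _ (Hg i) Hchain))).
  change (plus ?p ?q) with (p + q)%C.
  unfold Jac, one_if_eq. destruct i; simpl; ring.
Qed.

Section Coefficients.

Variables (x y z t : R) (A B : dir -> C).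

Hypothesis Hcompat : forall i l,
  (vfield A B (fun x y z t => lead i x y z t l) l x y z t
   + dsum (fun a => B a * pd a (ulead u i) x y z t))%C = 0%C.

Let sigma s i l := vfield A B (fun x y z t => phi s i x y z t l) l x y z t.

Lemma vfield_phi_analytic s i : RH_analytic s (sigma s i).
Proof.
  apply RH_analytic_dsum. intros a. apply RH_analytic_mult; [| apply Hpan].
  apply RH_analytic_plus; [apply RH_analytic_const |].
  apply RH_analytic_mult; [apply RH_analytic_id | apply RH_analytic_const].
Qed.

Lemma vfield_phi_vanishes s i : lim_inf_in (half s) (sigma s i) 0%C.
Proof.
  set (w a l := pd a (wres phi s i l) x y z t).
  set (D a := pd a (ulead u i) x y z t).
  apply lim_inf_in_ext with
    (fun l => dsum (fun a => A a * w a l + B a * (l * w a l - D a)))%C.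
  - intros l Hl. symmetry.
    transitivity (dsum (fun a => A a * w a l + B a * (l * w a l - D a))
                  + (vfield A B (fun x y z t => lead i x y z t l) l x y z t
                     + dsum (fun a => B a * D a)))%C.
    + unfold sigma, vfield, dsum, w, D.
      rewrite !pd_lead, !(pd_split_lead phi s i) by now apply Hpreg. ring.
    + unfold D. rewrite Hcompat. ring.
  - replace (RtoC 0) with (dsum (fun a => A a * 0 + B a * 0))%C by (unfold dsum; ring).
    apply lim_inf_in_dsum. intros a.
    apply lim_inf_in_plus; apply lim_inf_in_scal.
    + apply (lim_inf_in_mul_id_vanish _ _ (D a)), Hpas.
    + apply lim_inf_in_sub_limit, Hpas.
Qed.

Lemma vfield_phi_eq0 s i l : half s l -> sigma s i l = 0%C.
Proof.
  apply (Hlin x y z t sigma).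
  - apply vfield_phi_analytic.
  - apply (solves_lin_jump_dsum dR _ (fun a l => A a + l * B a)%C
             (fun a s i l => pd a (fun x y z t => phi s i x y z t l) x y z t)).
    intros a. apply pd_solves_lin_jump.
  - apply vfield_phi_vanishes.
Qed.

End Coefficients.

End Eigenfunctions.

Theorem proposition5p1
  (Rsp : idx -> C -> C -> R -> C)
  (dR : idx -> idx -> C -> C -> R -> C)
  (phi : sgn -> idx -> R -> R -> R -> R -> C -> C)
  (u : R -> R -> R -> R -> C)
  (HR : forall i (r : R) z1 z2,
      cdiff2 (fun a b => Rsp i a b r) z1 z2 (dR i I1 z1 z2 r) (dR i I2 z1 z2 r))
  (Hsol : forall x y z t, is_RH_solution Rsp x y z t (fun s i => phi s i x y z t))
  (Huniq : forall x y z t psi, is_RH_solution Rsp x y z t psi ->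
      forall s i l, half s l -> psi s i l = phi s i x y z t l)
  (Hlin : forall x y z t, lin_unique dR (fun i => phi Minus i x y z t))
  (Hu : forall s i x y z t,
      lim_inf_in (half s) (fun l => l * wres phi s i l x y z t)%C (ulead u i x y z t))
  (Hureg : forall a b x y z t, ex_pd a u x y z t /\ ex_pd a (pd b u) x y z t)
  (Hpreg : forall s i a x y z t l, half s l ->
      ex_pd a (fun x y z t => phi s i x y z t l) x y z t)
  (Hpan : forall s i a x y z t,
      RH_analytic s (fun l => pd a (fun x y z t => phi s i x y z t l) x y z t))
  (Hpas : forall s i a x y z t,
      lim_inf_in (half s) (fun l => l * pd a (wres phi s i l) x y z t)%C
        (pd a (ulead u i) x y z t)) :
  forall s i x y z t l, half s l ->
    Tvf u (fun x y z t => phi s i x y z t l) l x y z t = 0%C /\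
    Zvf u (fun x y z t => phi s i x y z t l) l x y z t = 0%C.
Proof.
  intros s i x y z t l Hl. rewrite Tvf_vfield, Zvf_vfield.
  split; refine (vfield_phi_eq0 Rsp dR phi u HR Hsol Hlin Hpreg Hpan Hpas x y z t _ _ _ s i l Hl);
    intros j l'; unfold vfield, dsum; rewrite !pd_lead; destruct j; simpl; ring.
Qed.
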